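(* Let $0<1/n_0\ll\delta\ll\alpha\ll 1$, and let $t,k,n\in\mathbb N$ with $n\geq n_0$ and $k^2-k+2\leq n\leq k^2+k+1$. Let $\mathcal H$ be an $n$-vertex hypergraph with codegree at most $t$ in which every edge has size at least $(1-\delta)\sqrt n$, and let $e,f\in\mathcal H$ be distinct edges of size at most $k$ with $V(e)\cap V(f)\neq\emptyset$ and $|V(e)\cap V(f)|\leq\alpha k$. If either (i) at least one of $e,f$ has size at most $k-1$, (ii) $|V(e)\cap V(f)|\geq 2$, or (iii) there exists a vertex in $V(e)\cap V(f)$ which is contained in at most $t/(4\delta)$ edges of size at most $k-1$, then $\{e,f\}$ is $t$-useful.
   Context: Constant hierarchies: a statement holding whenever $0<a\ll b\le 1$ means there is a non-decreasing function $f:(0,1]\to(0,1]$ such that it holds for all $a,b$ with $a\leq f(b)$; longer hierarchies are defined analogously, constants chosen from right to left. A hypergraph $\mathcal H$ has a finite vertex set $V(\mathcal H)$ and a finite set of edges, each edge $e$ with a nonempty set $V(e)\subseteq V(\mathcal H)$ (multiple edges allowed); $n$-vertex means $|V(\mathcal H)|=n$; the size of $e$ is $|V(e)|$. The codegree of $\mathcal H$ is the maximum over distinct vertices $u,v$ of the number of edges containing both. $N(e)$ is the set of edges $g\neq e$ with $V(e)\cap V(g)\neq\emptyset$. In an $n$-vertex hypergraph, a pair $\{e,f\}$ of distinct edges is $t$-useful if $V(e)\cap V(f)\neq\emptyset$ and $|N(e)\cap N(f)|\leq tn-3$. *)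

From HB Require Import structures.
From mathcomp Require Import all_boot all_order all_algebra.
From mathcomp Require Import reals.
Set Implicit Arguments. Unset Strict Implicit. Unset Printing Implicit Defensive.
Import Order.TTheory GRing.Theory Num.Theory.

(* A hypergraph: vertex set = the finType V (so n = #|V|), edges indexed by the
   finType E (distinct labels allow multiple edges), ve g = V(g), nonempty. *)
Definition hypergraph (V E : finType) (ve : E -> {set V}) : Prop :=
  forall g : E, ve g != set0.

Definition codegree (V E : finType) (ve : E -> {set V}) : nat :=
  \max_(p : V * V | p.1 != p.2) #|[set g : E | (p.1 \in ve g) && (p.2 \in ve g)]|.

Definition nbhd (V E : finType) (ve : E -> {set V}) (e : E) : {set E} :=
  [set g : E | (g != e) && (ve e :&: ve g != set0)].

Definition useful (V E : finType) (ve : E -> {set V}) (t : nat) (e f : E) : Prop :=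
  e != f /\ ve e :&: ve f != set0 /\
  (#|nbhd ve e :&: nbhd ve f|%:Z <= (t * #|V|)%:Z - 3)%R.

Local Open Scope ring_scope.
Definition hier_fun (R : realType) (f : R -> R) : Prop :=
  (forall x, 0 < x <= 1 -> 0 < f x <= 1) /\
  (forall x y, 0 < x -> x <= y -> y <= 1 -> f x <= f y).

From HB Require Import structures.
From mathcomp Require Import all_boot all_order all_algebra.
From mathcomp Require Import reals.
From mathcomp Require Import ring lra zify.
Import Order.TTheory GRing.Theory Num.Theory.
Set Implicit Arguments. Unset Strict Implicit. Unset Printing Implicit Defensive.

(* A common neighbour of e and f either contains a vertex of e :&: f or joins a
   vertex of e :\: f to one of f :\: e; by the codegree bound there are at most
   t |e :\: f| |f :\: e| edges of the second kind.  Since every edge has about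
   sqrt n ~ k vertices, double counting the pairs (g, w) with v, w in g shows
   that a vertex v lies in at most about t (1 + 2 delta) k edges.  In cases (i)
   and (ii) these two bounds give |N(e) :&: N(f)| <= t (k^2 - k - 1) <= t n - 3.
   In case (iii) we have e :&: f = {v} and |e| = |f| = k, and the same double
   counting, now using that all but t / (4 delta) of the edges through v have at
   least k vertices, shows that v lies in fewer than t (n - (k - 1)^2) edges. *)

Lemma leq_card_cover (T I : finType) (X : {set T}) (J : {set I}) (F : I -> {set T}) :
  X \subset \bigcup_(i in J) F i -> #|X| <= \sum_(i in J) #|F i|.
Proof.
move/subset_leq_card/leq_trans; apply.
elim/big_rec2: _ => [|i B n _ IH]; first by rewrite cards0.
by rewrite (leq_trans (leq_card_setU _ _)) // leq_add2l.
Qed.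

Section Hypergraph.

Variables (V E : finType) (ve : E -> {set V}).

Definition star (v : V) : {set E} := [set g | v \in ve g].

Lemma leq_codegree x y : x != y ->
  #|[set g | (x \in ve g) && (y \in ve g)]| <= codegree ve.
Proof.
by move=> xy; apply: (@leq_bigmax_cond _ _ (fun p : V * V => #|_|) (x, y)).
Qed.

Lemma card_starI_le v w : v != w -> #|star v :&: star w| <= codegree ve.
Proof.
by move=> vw; apply: leq_trans (leq_codegree vw); apply/eq_leq/eq_card => g; rewrite !inE.
Qed.

(* Double counting of the pairs (g, w) with v, w in g and w != v. *)
Lemma sum_star_le v :
  \sum_(g in star v) (#|ve g| - 1) <= codegree ve * (#|V| - 1).
Proof.
have card_edge g : g \in star v -> #|ve g| - 1 = \sum_(w | w != v) (w \in ve g : nat).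
  rewrite inE => vg; rewrite (cardsD1 v) vg add1n subSS subn0 -sum1_card.
  by rewrite big_mkcond [RHS]big_mkcond; apply: eq_bigr => w _; rewrite !inE; case: eqP.
have card_V : #|V| - 1 = \sum_(w | w != v) 1.
  by rewrite sum1dep_card -cardsT (cardsD1 v) in_setT add1n subSS subn0; apply: eq_card => w; rewrite !inE andbT.
rewrite (eq_bigr _ card_edge) exchange_big card_V big_distrr /=.
apply: leq_sum => w wv; rewrite muln1 eq_sym in wv *; apply: leq_trans (card_starI_le wv).
rewrite -sum1_card big_mkcond [X in _ <= X]big_mkcond /=; apply: leq_sum => g _.
by rewrite !inE; case: (v \in ve g); case: (w \in ve g).
Qed.

(* A common neighbour of e and f either meets e :&: f, or meets both e :\: f and f :\: e. *)
Lemma card_nbhdI_le e f :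
  #|nbhd ve e :&: nbhd ve f| <=
    codegree ve * (#|ve e :\: ve f| * #|ve f :\: ve e|) +
    \sum_(v in ve e :&: ve f) #|star v :\: [set e; f]|.
Proof.
set I := ve e :&: ve f.
set A := [set g | (g \notin [set e; f]) && (ve g :&: I != set0)].
set P := [set g | (ve g :&: (ve e :\: ve f) != set0) && (ve g :&: (ve f :\: ve e) != set0)].
have sub : nbhd ve e :&: nbhd ve f \subset A :|: P.
  apply/subsetP => g; rewrite !inE => /andP [/andP [ge eg] /andP [gf fg]].
  have [x /setIP [xe xg]] := set0Pn _ eg; have [y /setIP [yf yg]] := set0Pn _ fg.
  rewrite negb_or ge gf /=.
  case: set0Pn => [//|gI] /=; apply/andP; split; apply/set0Pn.
  - exists x; rewrite !inE xg xe andbT /=.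
    by apply/negP => xf; apply: gI; exists x; rewrite /I !inE xg xe xf.
  - exists y; rewrite !inE yg yf andbT /=.
    by apply/negP => ye; apply: gI; exists y; rewrite /I !inE yg ye yf.
apply: leq_trans (subset_leq_card sub) _; apply: leq_trans (leq_card_setU _ _) _.
rewrite addnC; apply: leq_add.
- apply: leq_trans (leq_card_cover (J := setX (ve e :\: ve f) (ve f :\: ve e))
    (F := fun p => star p.1 :&: star p.2) _) _.
  + apply/subsetP => g; rewrite inE => /andP [/set0Pn [x /setIP [xg xD]] /set0Pn [y /setIP [yg yD]]].
    by apply/bigcupP; exists (x, y); rewrite ?in_setX ?xD ?yD // !inE xg yg.
  + rewrite -cardsX -sum1_card big_distrr /=; apply: leq_sum => [[x y]].
    rewrite inE /= muln1 => /andP [xD yD]; apply: card_starI_le.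
    by apply: contraTneq xD => ->; rewrite !inE; move: yD; rewrite !inE => /andP [_ ->].
- apply: leq_card_cover; apply/subsetP => g; rewrite inE => /andP [gef /set0Pn [v /setIP [vg vI]]].
  by apply/bigcupP; exists v; rewrite // in_setD gef inE vg.
Qed.

End Hypergraph.

Local Open Scope ring_scope.

Lemma sqrtr_window (R : rcfType) (a b x : R) :
  a ^+ 2 < x -> x <= b ^+ 2 -> 0 <= b -> a < Num.sqrt x <= b.
Proof.
move=> ax xb b0; have x0 : 0 < x by apply: le_lt_trans ax; apply: sqr_ge0.
apply/andP; split.
  by apply: le_lt_trans (ler_norm a) _; rewrite -sqrtr_sqr ltr_sqrt.
by rewrite -(ger0_norm b0) -sqrtr_sqr ler_sqrt // sqr_ge0.
Qed.

Lemma excess_bound (R : realFieldType) (d r K : R) :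
  0 < d -> d <= 1/16 -> K - 1 < r -> r <= K + 1 -> 32 <= d * (K + 1) ->
  0 < (1 - d) * r - 1 /\ r ^+ 2 - 1 <= ((1 - d) * r - 1) * (K + 2 * d * K + 4).
Proof.
move=> d0 d1 Kr rK dK.
have K511 : 511 <= K by nra.
have c0 : 0 < (1 - d) * r - 1 by nra.
split => //.
have : ((1 - d) * r - 1) * ((r - 1) * (1 + 2 * d) + 4) <= ((1 - d) * r - 1) * (K + 2 * d * K + 4).
  by apply: ler_wpM2l; nra.
have : 0 <= (d - 2 * d ^+ 2) * r ^+ 2 by apply: mulr_ge0; nra.
have : r <= (2 - 7 * d + 2 * d ^+ 2) * r by nra.
nra.
Qed.

Lemma small_or_wide_arith (R : realFieldType) (d K s P : R) :
  0 <= d -> d <= 1/16 -> 511 <= K -> 1 <= s -> 8 * s <= K ->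
  P <= (K - s) ^+ 2 -> (s < 2 -> P <= (K - s) * (K - s - 1)) ->
  P + s * (K + 2 * d * K + 4) <= K ^+ 2 - K - 1.
Proof.
move=> d0 d1 K511 s1 sK Psq Ps1.
have dKs : d * (K * s) <= 1/16 * (K * s) by apply: ler_wpM2r; nra.
have ss : (8 * s) * s <= K * s by apply: ler_wpM2r; lra.
have Ks : 511 * s <= K * s by apply: ler_wpM2r; lra.
case: (ltrP s 2) => [s2 | s2].
  by have := Ps1 s2; nra.
have : K * 2 <= K * s by apply: ler_wpM2l; lra.
nra.
Qed.

Lemma sparse_vertex_arith (R : realFieldType) (T d r K N a b : R) :
  0 < T -> 0 < d -> d <= 1/16 -> 32 <= d * (K + 1) -> K - 1 < r -> r <= K + 1 ->
  K ^+ 2 - K + 2 <= N -> 0 <= a -> 4 * d * a <= T -> 0 <= b ->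
  a * ((1 - d) * r - 1) + b * (K - 1) <= T * (N - 1) ->
  a + b < T * (N - (K - 1) ^+ 2).
Proof.
(* If a + b >= W, then T (K - 2) <= a (K - (1 - d) r) <= T (1 + d (K + 1)) / (4 d),
   which fails as soon as d K is large. *)
move=> T0 d0 d1 dK Kr rK NK a0 aT b0 sum_le.
have K511 : 511 <= K by nra.
rewrite ltNge; apply/negP => W_le.
set W := T * (N - (K - 1) ^+ 2) in W_le.
have b_ge : (W - a) * (K - 1) <= b * (K - 1) by apply: ler_wpM2r; lra.
have W_gain : T * (K - 2) <= W * (K - 1) - T * (N - 1).
  have : 0 <= T * ((N - (K ^+ 2 - K + 2)) * (K - 2)) by apply: mulr_ge0; nra.
  rewrite /W; nra.
have a_loss : a * (K - (1 - d) * r) <= a * (1 + d * (K + 1)) by apply: ler_wpM2l => //; nra.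
have a_small : 4 * d * (a * (1 + d * (K + 1))) <= T * (1 + d * (K + 1)).
  by rewrite mulrA; apply: ler_wpM2r => //; nra.
nra.
Qed.

Section UsefulPair.

Variables (R : rcfType) (V E : finType) (ve : E -> {set V}) (t k : nat) (delta : R).
Variables (e f : E).

Hypotheses (delta_gt0 : 0 < delta) (delta_le : delta <= 1/16).
Hypothesis k_large : 32 <= delta * (k%:R + 1).
Hypotheses (n_ge : (k ^ 2 - k + 2 <= #|V|)%N) (n_le : (#|V| <= k ^ 2 + k + 1)%N).
Hypothesis codegree_le : (codegree ve <= t)%N.
Hypothesis edge_large : forall g, (1 - delta) * Num.sqrt #|V|%:R <= #|ve g|%:R.
Hypotheses (e_neq_f : e != f) (e_le : (#|ve e| <= k)%N) (f_le : (#|ve f| <= k)%N).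
Hypothesis ef_meet : ve e :&: ve f != set0.

Local Notation K := (k%:R : R).
Local Notation N := (#|V|%:R : R).
Local Notation T := (t%:R : R).
Local Notation excess := ((1 - delta) * Num.sqrt N - 1).
Local Notation degree_bound := (K + 2 * delta * K + 4).

Lemma n_ge_real : K ^+ 2 - K + 2 <= N.
Proof.
have : (k ^ 2 + 2 <= #|V| + k)%N by nia.
by rewrite -(ler_nat R) !natrD natrX; lra.
Qed.

Lemma sqrt_n_window : K - 1 < Num.sqrt N <= K + 1.
Proof.
have K_ge0 := ler0n R k.
apply: sqrtr_window; last by rewrite addr_ge0.
  by have := n_ge_real; nra.
by move: n_le; rewrite -(ler_nat R) !natrD natrX; nra.
Qed.

Lemma k_ge511 : 511 <= K.
Proof.
have : delta * (K + 1) <= 1/16 * (K + 1) by apply: ler_wpM2r; rewrite ?addr_ge0.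
by have := k_large; lra.
Qed.

Lemma excess_gt0 : 0 < excess.
Proof. by case/andP: sqrt_n_window => lo hi; case: (excess_bound delta_gt0 delta_le lo hi k_large). Qed.

Lemma n_le_excess : N - 1 <= excess * degree_bound.
Proof.
case/andP: sqrt_n_window => lo hi; case: (excess_bound delta_gt0 delta_le lo hi k_large).
by rewrite sqr_sqrtr.
Qed.

Lemma edge_card_gt1 g : (1 < #|ve g|)%N.
Proof. by rewrite -(ltr_nat R); have := edge_large g; have := excess_gt0; lra. Qed.

Lemma edge_excess g : excess <= (#|ve g| - 1)%:R.
Proof. by rewrite natrB ?(ltnW (edge_card_gt1 g)) //; have := edge_large g; lra. Qed.

Lemma t_gt0 : (0 < t)%N.
Proof.
have /card_gt1P [x [y [xe ye xy]]] := edge_card_gt1 e.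
apply: leq_trans codegree_le; apply: leq_trans (card_starI_le ve xy).
by rewrite card_gt0; apply/set0Pn; exists e; rewrite !inE xe ye.
Qed.

Lemma sum_star_excess v : \sum_(g in star ve v) ((#|ve g| - 1)%:R : R) <= T * (N - 1).
Proof.
have V_gt0 : (1 <= #|V|)%N by nia.
rewrite -natr_sum -(natrB _ V_gt0) -natrM ler_nat.
exact: leq_trans (sum_star_le ve v) (leq_mul codegree_le (leqnn _)).
Qed.

Lemma card_star_le v : #|star ve v|%:R <= T * degree_bound.
Proof.
rewrite -(ler_pM2r excess_gt0); apply: le_trans (_ : T * (N - 1) <= _).
  apply: le_trans (sum_star_excess v); rewrite mulr_natl -sumr_const.
  by apply: ler_sum => g _; apply: edge_excess.
by rewrite -[X in _ <= X]mulrA; apply: ler_wpM2l => //; rewrite mulrC n_le_excess.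
Qed.

Lemma useful_of_card : (#|nbhd ve e :&: nbhd ve f| + 3 <= t * #|V|)%N -> useful ve t e f.
Proof. by move=> X_le; do !split => //; rewrite lerBrDr -PoszD lez_nat. Qed.

Lemma useful_of_small_or_wide alpha :
  alpha <= 1/8 -> #|ve e :&: ve f|%:R <= alpha * K ->
  [|| (#|ve e| < k)%N, (#|ve f| < k)%N | (2 <= #|ve e :&: ve f|)%N] ->
  useful ve t e f.
Proof.
move=> alpha_le s_le small_or_wide.
set s := #|ve e :&: ve f| in s_le small_or_wide *.
set p1 := #|ve e :\: ve f|; set p2 := #|ve f :\: ve e|.
have e_split : (s + p1 = #|ve e|)%N by rewrite cardsID.
have f_split : (s + p2 = #|ve f|)%N by rewrite /s setIC cardsID.
have s_ge1 : (1 <= s)%N by rewrite card_gt0.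
have X_le : #|nbhd ve e :&: nbhd ve f|%:R <= T * (p1%:R * p2%:R) + s%:R * (T * degree_bound).
  have := leq_trans (card_nbhdI_le ve e f) (leq_add (leq_mul codegree_le (leqnn _)) (leqnn _)).
  rewrite -(ler_nat R) natrD !natrM natr_sum => /le_trans; apply; apply: lerD => //.
  rewrite mulr_natl -sumr_const; apply: ler_sum => v _; apply: le_trans (card_star_le v).
  by rewrite ler_nat; apply/subset_leq_card/subsetDl.
have p1_le : p1%:R <= K - s%:R by rewrite lerBrDl -natrD ler_nat e_split.
have p2_le : p2%:R <= K - s%:R by rewrite lerBrDl -natrD ler_nat f_split.
have p_le : p1%:R * p2%:R + s%:R * degree_bound <= K ^+ 2 - K - 1.
  apply: small_or_wide_arith (ltW delta_gt0) delta_le k_ge511 _ _ _ _.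
  - by rewrite (ler_nat R 1).
  - have : alpha * K <= 1/8 * K by apply: ler_wpM2r.
    lra.
  - by rewrite expr2; apply: ler_pM.
  rewrite (ltr_nat R s 2) => s_lt2.
  have [p1_lt|p2_lt] : (s + p1 < k \/ s + p2 < k)%N.
    case/or3P: small_or_wide => [e_lt|f_lt|two_le]; first by left; rewrite e_split.
      by right; rewrite f_split.
    by rewrite ltnNge two_le in s_lt2.
  + rewrite mulrC; apply: ler_pM => //.
    by move: p1_lt; rewrite -addn1 -(ler_nat R) !natrD; lra.
  + apply: ler_pM => //.
    by move: p2_lt; rewrite -addn1 -(ler_nat R) !natrD; lra.
have T_ge1 : 1 <= T by rewrite (ler_nat R 1) t_gt0.
apply: useful_of_card; rewrite -(ler_nat R) natrD natrM.
have : T * (p1%:R * p2%:R + s%:R * degree_bound) <= T * (K ^+ 2 - K - 1) by apply: ler_wpM2l; lra.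
have : T * (K ^+ 2 - K + 2) <= T * N by apply: ler_wpM2l; [lra | exact: n_ge_real].
lra.
Qed.

Lemma sum_star_split_excess v (L := [set g | (#|ve g| < k)%N]) :
  #|star ve v :&: L|%:R * excess + #|star ve v :\: L|%:R * (K - 1) <= T * (N - 1).
Proof.
apply: le_trans (sum_star_excess v); rewrite (big_setID L) /=.
apply: lerD; rewrite mulr_natl -sumr_const; apply: ler_sum => g; first by rewrite edge_excess.
rewrite !inE -leqNgt => /andP [k_le _].
by rewrite natrB ?(ltnW (edge_card_gt1 g)) // lerD2r ler_nat.
Qed.

Lemma useful_of_sparse_vertex v :
  ve e :&: ve f = [set v] -> #|ve e| = k -> #|ve f| = k ->
  #|[set g | (v \in ve g) && (#|ve g| < k)%N]|%:R <= T / (4 * delta) ->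
  useful ve t e f.
Proof.
set D := star ve v; set L := [set g | (#|ve g| < k)%N].
have -> : [set g | (v \in ve g) && (#|ve g| < k)%N] = D :&: L by apply/setP => g; rewrite !inE.
move=> Iv e_k f_k sparse.
have [ve_e ve_f] : v \in ve e /\ v \in ve f by apply/setIP; rewrite Iv set11.
have k_gt1 : (1 < k)%N by rewrite -e_k edge_card_gt1.
have e_diff : #|ve e :\: ve f| = (k - 1)%N.
  by rewrite -e_k -(cardsID (ve f) (ve e)) Iv cards1 add1n subn1.
have f_diff : #|ve f :\: ve e| = (k - 1)%N.
  by rewrite -f_k -(cardsID (ve e) (ve f)) setIC Iv cards1 add1n subn1.
have others : (#|D :\: [set e; f]| + 2 = #|D|)%N.
  have ef_D : [set e; f] \subset D by rewrite subUset !sub1set !inE ve_e ve_f.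
  rewrite cardsD (setIidPr ef_D) cards2 e_neq_f subnK //.
  by have := subset_leq_card ef_D; rewrite cards2 e_neq_f.
have X_le : (#|nbhd ve e :&: nbhd ve f| + 2 <= t * (k - 1) ^ 2 + #|D|)%N.
  apply: leq_trans (leq_add (card_nbhdI_le ve e f) (leqnn 2)) _.
  by rewrite Iv big_set1 e_diff f_diff -addnA others leq_add2r mulnn leq_mul.
have sq_le : ((k - 1) ^ 2 <= #|V|)%N by clear -n_ge; nia.
have D_lt : (#|D| < t * (#|V| - (k - 1) ^ 2))%N.
  rewrite -(ltr_nat R) -(cardsID L D) natrD natrM natrB // natrX natrB ?(ltnW k_gt1) //.
  have T_gt0 : 0 < T by rewrite ltr0n t_gt0.
  have [lo hi] := andP sqrt_n_window.
  apply: sparse_vertex_arith T_gt0 delta_gt0 delta_le k_large lo hi n_ge_real _ _ _ _;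
    rewrite ?ler0n //; last exact: sum_star_split_excess.
  by rewrite -ler_pdivlMl ?mulr_gt0 // mulrC.
apply: useful_of_card; rewrite mulnBr in D_lt.
have := leq_mul (leqnn t) sq_le; clear -X_le D_lt; lia.
Qed.

Lemma useful_pair alpha :
  alpha <= 1/8 -> #|ve e :&: ve f|%:R <= alpha * K ->
  [\/ (#|ve e| < k)%N \/ (#|ve f| < k)%N, (2 <= #|ve e :&: ve f|)%N
    | exists2 v, v \in ve e :&: ve f &
        #|[set g | (v \in ve g) && (#|ve g| < k)%N]|%:R <= T / (4 * delta)] ->
  useful ve t e f.
Proof.
move=> alpha_le s_le cases.
have [|] := boolP [|| (#|ve e| < k)%N, (#|ve f| < k)%N | (2 <= #|ve e :&: ve f|)%N].
  exact: useful_of_small_or_wide alpha_le s_le.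
rewrite !negb_or -!leqNgt => /and3P [k_le_e k_le_f s_le1].
case: cases => [[e_lt|f_lt]|two_le|[v vI sparse]].
- by rewrite ltnNge k_le_e in e_lt.
- by rewrite ltnNge k_le_f in f_lt.
- by rewrite ltnNge s_le1 in two_le.
apply: (useful_of_sparse_vertex (v := v)) sparse; try by apply/eqP; rewrite eqn_leq ?e_le ?f_le.
by apply/eqP; rewrite eq_sym eqEcard sub1set vI cards1.
Qed.

End UsefulPair.

Lemma le_mul_of_invr_le_sqr (R : realFieldType) (c d x y : R) :
  0 < c -> 0 < x -> 0 <= d -> 0 <= y -> x <= y ^+ 2 -> x^-1 <= (d / c) ^+ 2 -> c <= d * y.
Proof.
move=> c_gt0 x_gt0 d_ge0 y_ge0 x_le inv_le.
have : 1 ^+ 2 <= (y * (d / c)) ^+ 2.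
  rewrite expr1n exprMn; apply: le_trans (_ : x * (d / c) ^+ 2 <= _).
    by rewrite -(divff (lt0r_neq0 x_gt0)) ler_pM2l.
  by apply: ler_wpM2r => //; apply: sqr_ge0.
have yd_ge0 : 0 <= y * (d / c) by apply: mulr_ge0 => //; apply: divr_ge0 => //; apply: ltW.
by rewrite ler_sqr ?nnegrE // mulrA ler_pdivlMr // mul1r mulrC.
Qed.

Lemma hier_fun_cst (R : realType) (c : R) : 0 < c <= 1 -> hier_fun (fun _ => c).
Proof. by move=> c_in; split. Qed.

Lemma hier_fun_sqr (R : realType) (c : R) : 1 <= c -> hier_fun (fun x => (x / c) ^+ 2).
Proof.
move=> c_ge1; have c_gt0 : 0 < c by lra.
have div_ge0 z : 0 < z -> 0 <= z / c by move=> z_gt0; apply: divr_ge0; apply: ltW.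
split => [x /andP [x_gt0 x_le1] | x y x_gt0 x_le_y _].
  rewrite exprn_gt0 ?divr_gt0 //= expr_le1 ?div_ge0 // ler_pdivrMr // mul1r; lra.
have y_gt0 := lt_le_trans x_gt0 x_le_y.
by rewrite ler_sqr ?nnegrE ?div_ge0 // ler_pM2r ?invr_gt0.
Qed.

Theorem proposition4p6 (R : realType) :
  exists (a0 : R), 0 < a0 <= 1 /\
  exists (fd : R -> R), hier_fun fd /\
  exists (fn : R -> R), hier_fun fn /\
  forall (alpha delta : R) (n0 : nat),
    0 < alpha <= 1 -> alpha <= a0 ->
    0 < delta <= 1 -> delta <= fd alpha ->
    (0 < n0)%N -> (n0%:R)^-1 <= fn delta ->
  forall (t k n : nat) (V E : finType) (ve : E -> {set V}) (e f : E),
    #|V| = n -> (n0 <= n)%N ->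
    (k ^ 2 - k + 2 <= n)%N -> (n <= k ^ 2 + k + 1)%N ->
    hypergraph ve ->
    (codegree ve <= t)%N ->
    (forall g : E, (1 - delta) * Num.sqrt (n%:R) <= (#|ve g|%:R : R)) ->
    e != f -> (#|ve e| <= k)%N -> (#|ve f| <= k)%N ->
    ve e :&: ve f != set0 ->
    (#|ve e :&: ve f|%:R : R) <= alpha * k%:R ->
    [\/ (#|ve e| < k)%N \/ (#|ve f| < k)%N,
        (2 <= #|ve e :&: ve f|)%N
      | exists2 v : V, v \in ve e :&: ve f &
          (#|[set g : E | (v \in ve g) && (#|ve g| < k)%N]|%:R : R)
            <= t%:R / (4 * delta)] ->
    useful ve t e f.
Proof.
exists (1/8); split; first lra.
exists (fun _ => 1/16); split; first by apply: hier_fun_cst; lra.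
exists (fun x => (x / 32) ^+ 2); split; first by apply: hier_fun_sqr; lra.
move=> alpha delta n0 _ alpha_le /andP [delta_gt0 _] delta_le n0_gt0 n0_inv t k n V E ve e f
  n_eq n0_le n_ge n_le _ codeg_le edge_large e_neq_f e_le f_le meet s_le cases.
subst n.
have k_large : 32 <= delta * (k%:R + 1).
  apply: le_mul_of_invr_le_sqr n0_inv; rewrite ?ltr0n ?(ltW delta_gt0) ?addr_ge0 //.
  by rewrite natr1 -natrX ler_nat; nia.
exact: (useful_pair delta_gt0 delta_le k_large n_ge n_le codeg_le edge_large
  e_neq_f e_le f_le meet alpha_le s_le cases).
Qed.
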